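(* Let $n\in\mathbb{N}$, $\boldsymbol{A}\in\mathbb{R}^{n\times n}$, $\boldsymbol{b}\in\mathbb{R}^n$ with $(\boldsymbol{A},\boldsymbol{b})$ controllable, and $g:\mathbb{R}^n\to\mathbb{R}$ with $g(\boldsymbol{0})\neq 0$. Let $\mathcal{X}=\bigcup_{i=1}^s\mathcal{X}_i\subset\mathbb{R}^n$ with $s\in\mathbb{N}$ and each $\mathcal{X}_i$ convex, such that for every $i$ either ($g(\boldsymbol{x})\ge 0$ for all $\boldsymbol{x}\in\mathcal{X}_i$ and $g$ is concave on $\mathcal{X}_i$) or ($g(\boldsymbol{x})\le 0$ for all $\boldsymbol{x}\in\mathcal{X}_i$ and $g$ is convex on $\mathcal{X}_i$); assume $\boldsymbol{0}\in\mathrm{int}(\mathcal{X}_1)$, and let $\mathcal{U}=[\underline{u},\overline{u}]$ with $\underline{u}<0<\overline{u}$. Let $\boldsymbol{c}\in\mathbb{R}^n$ satisfy $\boldsymbol{c}^\top\boldsymbol{A}^{i}\boldsymbol{b}=0$ for $i\in\{0,\dots,n-2\}$ and $\boldsymbol{c}^\top\boldsymbol{A}^{n-1}\boldsymbol{b}\neq0$, let $b_0\neq 0$, $a_0,\dots,a_{n-1}\in\mathbb{R}$, $\beta:=\boldsymbol{c}^\top\boldsymbol{A}^{n-1}\boldsymbol{b}$, $\boldsymbol{\alpha}^\top:=\boldsymbol{c}^\top(\boldsymbol{A}^n+\sum_{i=0}^{n-1}a_i\boldsymbol{A}^i)$. Let $\mathcal{X}^\circ:=\{\boldsymbol{x}\in\mathbb{R}^n\mid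 g(\boldsymbol{x})\neq0\}$, $\Psi(\boldsymbol{x},v):=\frac{b_0v-\boldsymbol{\alpha}^\top\boldsymbol{x}}{\beta g(\boldsymbol{x})}$ for $\boldsymbol{x}\in\mathcal{X}^\circ$, and $$\mathcal{Z}:=\Big\{(\boldsymbol{x},v)\in\mathbb{R}^{n+1}\,\Big|\,\boldsymbol{x}\in\mathcal{X}\cap\mathcal{X}^\circ,\ \Psi(\boldsymbol{x},v)\in\mathcal{U}\Big\}\cup\Big\{(\boldsymbol{x},v)\in\mathbb{R}^{n+1}\,\Big|\,\boldsymbol{x}\in\mathcal{X}\setminus\mathcal{X}^\circ,\ v=\tfrac{\boldsymbol{\alpha}^\top\boldsymbol{x}}{b_0}\Big\}.$$ For $i\in\{1,\dots,s\}$ define $\mathcal{U}_i(\boldsymbol{x}):=[\beta g(\boldsymbol{x})\underline{u},\beta g(\boldsymbol{x})\overline{u}]$ if $\beta g(\boldsymbol{x})\ge0$ for all $\boldsymbol{x}\in\mathcal{X}_i$, and $\mathcal{U}_i(\boldsymbol{x}):=[\beta g(\boldsymbol{x})\overline{u},\beta g(\boldsymbol{x})\underline{u}]$ otherwise, and $$\mathcal{Z}_i:=\Big\{(\boldsymbol{x},v)\in\mathbb{R}^{n+1}\,\Big|\,\boldsymbol{x}\in\mathcal{X}_i,\ b_0v-\boldsymbol{\alpha}^\top\boldsymbol{x}\in\mathcal{U}_i(\boldsymbol{x})\Big\}.$$ Then each $\mathcal{Z}_i$ is convex and $\mathcal{Z}=\bigcup_{i=1}^s\mathcal{Z}_i$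.
   Context: This arises from the discrete-time system $\boldsymbol{x}(k+1)=\boldsymbol{A}\boldsymbol{x}(k)+g(\boldsymbol{x}(k))\boldsymbol{b}\,u(k)$ with constraints $\boldsymbol{x}\in\mathcal{X}$, $u\in\mathcal{U}$; $\Psi$ is the exactly linearizing feedback $u=\Psi(\boldsymbol{x},v)$ with artificial input $v$. *)

From HB Require Import structures.
From mathcomp Require Import all_boot all_order all_algebra.
From mathcomp Require Import all_classical all_reals all_analysis.
Set Implicit Arguments. Unset Strict Implicit. Unset Printing Implicit Defensive.
Import Order.TTheory GRing.Theory Num.Theory numFieldNormedType.Exports.
Local Open Scope ring_scope.
Local Open Scope classical_set_scope.
Local Open Scope convex_scope.

Definition concave_function (R : realType) (E : lmodType R)
    (D : set (convex_lmodType E)) (f : convex_lmodType E -> R^o) :=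
  forall (t : {i01 R}),
    {in D &, forall x y : convex_lmodType E, f x <| t |> f y <= f (x <| t |> y)}.

Definition ctrb_mx (R : realType) (n : nat) (A : 'M[R]_n) (b : 'cV[R]_n) : 'M[R]_n :=
  \matrix_(i < n, j < n) (A ^+ j *m b) i ord0.

Definition controllable (R : realType) (n : nat) (A : 'M[R]_n) (b : 'cV[R]_n) :=
  \rank (ctrb_mx A b) = n.

Definition cAib (R : realType) (n : nat) (c : 'cV[R]_n) (A : 'M[R]_n)
  (b : 'cV[R]_n) (i : nat) : R := (c^T *m (A ^+ i) *m b) ord0 ord0.

Definition alphaT (R : realType) (n : nat) (c : 'cV[R]_n) (A : 'M[R]_n)
  (a : 'I_n -> R) : 'rV[R]_n :=
  c^T *m (A ^+ n + \sum_(i < n) a i *: A ^+ i).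

Definition alphax (R : realType) (n : nat) (c : 'cV[R]_n) (A : 'M[R]_n)
  (a : 'I_n -> R) (x : 'cV[R]_n) : R := (alphaT c A a *m x) ord0 ord0.

Definition Psi (R : realType) (n : nat) (c : 'cV[R]_n) (A : 'M[R]_n) (b : 'cV[R]_n)
  (a : 'I_n -> R) (b0 : R) (g : 'cV[R]_n -> R) (x : 'cV[R]_n) (v : R) : R :=
  (b0 * v - alphax c A a x) / (cAib c A b n.-1 * g x).

Definition idx (s : nat) : set nat := [set i | (1 <= i <= s)%N].

Definition Xunion (R : realType) (n s : nat) (Xs : nat -> set 'cV[R]_n) : set 'cV[R]_n :=
  \bigcup_(i in idx s) Xs i.

Definition Zset (R : realType) (n s : nat) (Xs : nat -> set 'cV[R]_n)
  (c : 'cV[R]_n) (A : 'M[R]_n) (b : 'cV[R]_n) (a : 'I_n -> R) (b0 : R)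
  (g : 'cV[R]_n -> R) (ulo uhi : R) : set ('cV[R]_n * R^o) :=
  [set p | Xunion s Xs p.1 /\ g p.1 != 0 /\
           ulo <= Psi c A b a b0 g p.1 p.2 <= uhi]
  `|` [set p | Xunion s Xs p.1 /\ g p.1 = 0 /\ p.2 = alphax c A a p.1 / b0].

Definition Ui (R : realType) (n : nat) (Xi : set 'cV[R]_n) (beta : R)
  (g : 'cV[R]_n -> R) (ulo uhi : R) (x : 'cV[R]_n) : set R :=
  if `[< forall y, Xi y -> 0 <= beta * g y >]
  then [set w | beta * g x * ulo <= w <= beta * g x * uhi]
  else [set w | beta * g x * uhi <= w <= beta * g x * ulo].

Definition Zi (R : realType) (n : nat) (Xi : set 'cV[R]_n)
  (c : 'cV[R]_n) (A : 'M[R]_n) (b : 'cV[R]_n) (a : 'I_n -> R) (b0 : R)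
  (g : 'cV[R]_n -> R) (ulo uhi : R) : set ('cV[R]_n * R^o) :=
  [set p | Xi p.1 /\
           Ui Xi (cAib c A b n.-1) g ulo uhi p.1 (b0 * p.2 - alphax c A a p.1)].

(* Put G := beta g.  On each X_i the hypothesis on g makes G either
   nonnegative and concave or nonpositive and convex, and the sign test in
   U_i picks the matching alternative (if G >= 0 on X_i although G is of the
   second kind, then G = 0 on X_i, which is concave too).  So Z_i consists of
   the (x, v) with x in X_i for which the affine quantity b0 v - alpha^T x
   lies between a convex function of x (G u_lo, resp. G u_hi) and a concave
   one (G u_hi, resp. G u_lo); such a region is convex.  Where G x <> 0,
   dividing by G x turns b0 v - alpha^T x in U_i(x) into Psi(x, v) in U, and
   where g x = 0, U_i(x) = {0} says exactly v = alpha^T x / b0. *)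

From HB Require Import structures.
From mathcomp Require Import all_boot all_order all_algebra.
From mathcomp Require Import all_classical all_reals all_analysis.
From mathcomp Require Import ring.
Import Order.TTheory GRing.Theory Num.Theory numFieldNormedType.Exports.
Local Open Scope ring_scope.
Local Open Scope classical_set_scope.
Local Open Scope convex_scope.

Section real_convex_combination.
Context {R : realType}.
Implicit Types (a b c d k : R^o) (t : {i01 R}).

Lemma ler_conv t {a b c d} : a <= c -> b <= d -> a <| t |> b <= c <| t |> d.
Proof. by move=> ac bd; rewrite !convRE lerD // ler_wpM2l // unstable.onem_ge0. Qed.

Lemma convRMr a b k t : (a <| t |> b) * k = (a * k) <| t |> (b * k).
Proof. by rewrite !convRE mulrDl !mulrA. Qed.

End real_convex_combination.

Section scaled_convexity.
Context {R : realType} {E : lmodType R} (D : set (convex_lmodType E)).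
Implicit Types (f : convex_lmodType E -> R^o) (k : R).

Lemma convex_functionMr_ge0 f k :
  convex_function D f -> 0 <= k -> convex_function D (fun x => f x * k).
Proof. by move=> fD k0 t x y Dx Dy; rewrite -convRMr ler_wpM2r // fD. Qed.

Lemma convex_functionMr_le0 f k :
  convex_function D f -> k <= 0 -> concave_function D (fun x => f x * k).
Proof. by move=> fD k0 t x y Dx Dy; rewrite -convRMr ler_wnM2r // fD. Qed.

Lemma concave_functionMr_ge0 f k :
  concave_function D f -> 0 <= k -> concave_function D (fun x => f x * k).
Proof. by move=> fD k0 t x y Dx Dy; rewrite -convRMr ler_wpM2r // fD. Qed.

Lemma concave_functionMr_le0 f k :
  concave_function D f -> k <= 0 -> convex_function D (fun x => f x * k).
Proof. by move=> fD k0 t x y Dx Dy; rewrite -convRMr ler_wnM2r // fD. Qed.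

End scaled_convexity.

Lemma convex_set_between_graphs {R : realType} {E : lmodType R}
    {D : set (convex_lmodType E)} {L H : convex_lmodType E -> R^o}
    {w : convex_lmodType E -> R^o -> R^o} :
  convex_set D -> convex_function D L -> concave_function D H ->
  (forall x y v u t, w (x <| t |> y) (v <| t |> u) = w x v <| t |> w y u) ->
  convex_set [set p : convex_lmodType (E * R^o)%type |
               D p.1 /\ L p.1 <= w p.1 p.2 <= H p.1].
Proof.
move=> cD cL cH w_conv [x v] [y u] t.
rewrite !inE /= => -[Dx /andP[Lx Hx]] [Dy /andP[Ly Hy]].
set z := (x : convex_lmodType E) <| t |> y.
have Dz : D z by have := cD x y t; rewrite !inE; apply.
change (D z /\ L z <= w z (v <| t |> u) <= H z); rewrite w_conv.
split => //; apply/andP; split.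
- by apply: (le_trans _ (ler_conv t Lx Ly)); apply: cL; exact/mem_set.
- by apply: (le_trans (ler_conv t Hx Hy)); apply: cH; exact/mem_set.
Qed.

Definition nonneg_concave_or_nonpos_convex {R : realType} {E : lmodType R}
    (D : set (convex_lmodType E)) (f : convex_lmodType E -> R^o) : Prop :=
  ((forall x, D x -> 0 <= f x) /\ concave_function D f) \/
  ((forall x, D x -> f x <= 0) /\ convex_function D f).

Section nonneg_concave_or_nonpos_convex.
Context {R : realType} {E : lmodType R} {D : set (convex_lmodType E)}.
Context {f : convex_lmodType E -> R^o}.
Local Notation ncnc := nonneg_concave_or_nonpos_convex.

Lemma ncnc_Ml k : ncnc D f -> ncnc D (fun x => k * f x).
Proof.
have -> : (fun x => k * f x) = (fun x => f x * k) by apply/funext => x; rewrite mulrC.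
case=> -[f0 fc]; have [k0|k0] := leP 0 k.
- by left; split=> [x /f0 fx0|]; [exact: mulr_ge0 | exact: concave_functionMr_ge0].
- right; split=> [x /f0 fx0|]; first exact: mulr_ge0_le0 (ltW k0).
  exact: concave_functionMr_le0 (ltW k0).
- by right; split=> [x /f0 fx0|]; [exact: mulr_le0_ge0 | exact: convex_functionMr_ge0].
- left; split=> [x /f0 fx0|]; first exact: mulr_le0 (ltW k0).
  exact: convex_functionMr_le0 (ltW k0).
Qed.

Lemma ncnc_concave : convex_set D -> ncnc D f ->
  (forall x, D x -> 0 <= f x) -> concave_function D f.
Proof.
move=> cD [[_ //]|[fle0 _]] fge0 t x y Dx Dy.
have f0 z : D z -> f z = 0 by move=> Dz; apply/le_anti; rewrite fle0 ?fge0.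
have Dxy : D (x <| t |> y) by have := cD x y t Dx Dy; rewrite inE.
by rewrite !f0 ?convmm //; exact/set_mem.
Qed.

Lemma ncnc_nonpos : ncnc D f -> ~ (forall x, D x -> 0 <= f x) ->
  (forall x, D x -> f x <= 0) /\ convex_function D f.
Proof. by case=> -[f0 fc] // /(_ f0). Qed.

End nonneg_concave_or_nonpos_convex.

Lemma ler_pdivMr_itv {R : realFieldType} (G w lo hi : R) : 0 < G ->
  (lo <= w / G <= hi) = (G * lo <= w <= G * hi).
Proof. by move=> G0; rewrite ler_pdivlMr // ler_pdivrMr // ![_ * G]mulrC. Qed.

Lemma ler_ndivMr_itv {R : realFieldType} (G w lo hi : R) : G < 0 ->
  (lo <= w / G <= hi) = (G * hi <= w <= G * lo).
Proof. by move=> G0; rewrite ler_ndivlMr // ler_ndivrMr // ![_ * G]mulrC andbC. Qed.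

Section feedback_bounds.
Context {R : realType} {n : nat} (Xi : set 'cV[R]_n) (beta : R) (g : 'cV[R]_n -> R).
Context (lo hi : R).
Hypothesis Gncnc : nonneg_concave_or_nonpos_convex Xi (fun x => beta * g x).

Lemma Ui_neq0 x w : Xi x -> beta * g x != 0 ->
  Ui Xi beta g lo hi x w = (lo <= w / (beta * g x) <= hi).
Proof.
move=> Xx Gx0; rewrite /Ui; case: asboolP => [Gge0|Gnneg] /=.
  by rewrite ler_pdivMr_itv // lt_neqAle eq_sym Gx0 Gge0.
by rewrite ler_ndivMr_itv // lt_neqAle Gx0 (ncnc_nonpos Gncnc Gnneg).1.
Qed.

Lemma Ui_eq0 x w : g x = 0 -> Ui Xi beta g lo hi x w = (w == 0).
Proof. by move=> gx0; rewrite /Ui gx0 mulr0 !mul0r eq_le andbC; case: asboolP. Qed.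

End feedback_bounds.

Lemma alphax_conv {R : realType} {n : nat} (c : 'cV[R]_n) A a (x y : 'cV[R]_n) t :
  alphax c A a ((x : convex_lmodType _) <| t |> y) =
  (alphax c A a x : R^o) <| t |> alphax c A a y.
Proof. by rewrite /alphax /= mulmxDr -!scalemxAr !mxE. Qed.

Section linearised_input_set.
Context {R : realType} {n : nat} {Xi : set 'cV[R]_n} {c : 'cV[R]_n} {A : 'M[R]_n}.
Context {b : 'cV[R]_n} {a : 'I_n -> R} {b0 : R} {g : 'cV[R]_n -> R} {lo hi : R}.
Local Notation beta := (cAib c A b n.-1).
Hypothesis gncnc : nonneg_concave_or_nonpos_convex Xi g.

Lemma Zi_convex : convex_set Xi -> lo <= 0 -> 0 <= hi ->
  convex_set (Zi Xi c A b a b0 g lo hi).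
Proof.
move=> cX lo0 hi0; have Gncnc := ncnc_Ml beta gncnc.
have w_conv (x y : convex_lmodType 'cV[R]_n) (v u : R^o) t :
    b0 * (v <| t |> u) - alphax c A a (x <| t |> y) =
    (b0 * v - alphax c A a x : R^o) <| t |> (b0 * u - alphax c A a y).
  by rewrite alphax_conv !convRE; ring.
rewrite /Zi /Ui; case: asboolP => [Gge0|Gnneg].
- have Gc := ncnc_concave cX Gncnc Gge0.
  apply: (convex_set_between_graphs (L := fun x => beta * g x * lo)
    (H := fun x => beta * g x * hi) (w := fun x v => b0 * v - alphax c A a x)) => //.
  + exact: concave_functionMr_le0.
  + exact: concave_functionMr_ge0.
- have [_ Gc] := ncnc_nonpos Gncnc Gnneg.
  apply: (convex_set_between_graphs (L := fun x => beta * g x * hi)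
    (H := fun x => beta * g x * lo) (w := fun x v => b0 * v - alphax c A a x)) => //.
  + exact: convex_functionMr_ge0.
  + exact: convex_functionMr_le0.
Qed.

Lemma Zi_pairE x v : beta != 0 -> b0 != 0 -> Xi x ->
  Zi Xi c A b a b0 g lo hi (x, v) <->
  (g x != 0 /\ lo <= Psi c A b a b0 g x v <= hi) \/
  (g x = 0 /\ v = alphax c A a x / b0).
Proof.
move=> beta0 b00 Xx; rewrite /Zi /=; have [gx0|gx0] := eqVneq (g x) 0.
- rewrite Ui_eq0 // subr_eq0; split=> [[_ /eqP bv]|[[]//|[_ ->]]].
    by right; split=> //; rewrite -bv mulrAC divff ?mul1r.
  by split=> //; rewrite mulrC divfK.
- rewrite Ui_neq0 ?mulf_neq0 //; last exact: ncnc_Ml.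
  split=> [[_ Psi_itv]|[[_ Psi_itv]|[gx_eq0]]]; [by left | by [] |].
  by rewrite gx_eq0 eqxx in gx0.
Qed.

End linearised_input_set.

Theorem theorem1 (R : realType) (n : nat) (A : 'M[R]_n) (b : 'cV[R]_n)
  (g : 'cV[R]_n -> R) (s : nat) (Xs : nat -> set 'cV[R]_n)
  (ulo uhi : R) (c : 'cV[R]_n) (b0 : R) (a : 'I_n -> R) :
  controllable A b ->
  g 0 != 0 ->
  (1 <= s)%N ->
  (forall i, (1 <= i <= s)%N -> convex_set (Xs i)) ->
  (forall i, (1 <= i <= s)%N ->
     ((forall x, Xs i x -> 0 <= g x) /\ concave_function (Xs i) g) \/
     ((forall x, Xs i x -> g x <= 0) /\ convex_function (Xs i) g)) ->
  interior (Xs 1%N) 0 ->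
  ulo < 0 -> 0 < uhi ->
  (forall i, (i.+2 <= n)%N -> cAib c A b i = 0) ->
  cAib c A b n.-1 != 0 ->
  b0 != 0 ->
  (forall i, (1 <= i <= s)%N -> convex_set (Zi (Xs i) c A b a b0 g ulo uhi)) /\
  Zset s Xs c A b a b0 g ulo uhi = \bigcup_(i in idx s) Zi (Xs i) c A b a b0 g ulo uhi.
Proof.
(* Controllability, g 0 != 0, s >= 1, 0 \in int X_1 and the relative-degree
   conditions only make Psi the exactly linearising feedback; neither claim
   depends on them. *)
move=> _ _ _ Xconvex gshape _ lo_lt0 hi_gt0 _ beta0 b00; split.
  by move=> i si; apply: Zi_convex; [exact: gshape | exact: Xconvex | exact: ltW ..].
apply/seteqP; split=> -[x v] /=.
- case=> -[[i si Xx] xv_itv]; exists i => //;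
    apply/(Zi_pairE (gshape i si) _ _ beta0 b00 Xx).
  + by left.
  + by right.
- case=> i si Zxv; have [Xx _] := Zxv; have Xux : Xunion s Xs x by exists i.
  case/(Zi_pairE (gshape i si) _ _ beta0 b00 Xx): Zxv => xv_itv.
  + by left.
  + by right.
Qed.
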